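(* For every pair of integers $h,n\geq 2$, the trivial subgroup $\{(id,id)\}$ of $S_h\times S_n$ is an anonymity group, a neutrality group and a symmetry group with respect to $(h,n)$.
   Context: Permutations compose as $(\sigma\tau)(x)=\sigma(\tau(x))$. Let $G=S_h\times S_n$ and $\mathcal{P}=(S_n)^h$ (preference profiles), with $G$ acting by $(p^{(\varphi,\psi)})_i=\psi\,p_{\varphi^{-1}(i)}$. A social preference function (SPF) is any $F:\mathcal{P}\to S_n$. Its symmetry group is $G(F)=\{(\varphi,\psi)\in G: F(p^{(\varphi,\psi)})=\psi F(p)\ \forall p\}$, its anonymity group is $G_1(F)=G(F)\cap(S_h\times\{id\})$ and its neutrality group is $G_2(F)=G(F)\cap(\{id\}\times S_n)$. A subgroup $U$ is a symmetry (resp. anonymity, neutrality) group with respect to $(h,n)$ if $U=G(F)$ (resp. $U=G_1(F)$, $U=G_2(F)$) for some SPF $F$. *)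

From mathcomp Require Import all_boot all_fingroup.
Set Implicit Arguments.
Unset Strict Implicit.
Unset Printing Implicit Defensive.
Local Open Scope group_scope.

(* Convention: the paper composes as (s t)(x) = s (t x); in mathcomp
   (s * t) x = t (s x).  Hence the paper's composite psi o p is
   written here as (p * psi) (mathcomp product), and the paper's
   psi F(p) as F p * psi. *)

Definition profile (h n : nat) := {ffun 'I_h -> 'S_n}.

Definition SPF (h n : nat) := profile h n -> 'S_n.

Definition act_profile (h n : nat) (p : profile h n) (g : 'S_h * 'S_n)
  : profile h n :=
  [ffun i => p (g.1^-1 i) * g.2].

Definition symgroup (h n : nat) (F : SPF h n) : {set 'S_h * 'S_n} :=
  [set g : 'S_h * 'S_n | [forall p : profile h n,
      F (act_profile p g) == F p * g.2]].

Definition anongroup (h n : nat) (F : SPF h n) : {set 'S_h * 'S_n} :=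
  symgroup F :&: [set g : 'S_h * 'S_n | g.2 == 1].

Definition neutgroup (h n : nat) (F : SPF h n) : {set 'S_h * 'S_n} :=
  symgroup F :&: [set g : 'S_h * 'S_n | g.1 == 1].

Definition is_symmetry_group (h n : nat) (U : {set 'S_h * 'S_n}) :=
  exists F : SPF h n, symgroup F = U.
Definition is_anonymity_group (h n : nat) (U : {set 'S_h * 'S_n}) :=
  exists F : SPF h n, anongroup F = U.
Definition is_neutrality_group (h n : nat) (U : {set 'S_h * 'S_n}) :=
  exists F : SPF h n, neutgroup F = U.

Definition trivial_sub (h n : nat) : {set 'S_h * 'S_n} := [set (1, 1)].

From mathcomp Require Import all_boot order all_fingroup.

(** Fix a permutation [s <> 1] and let [F q = s] if the voters reporting [s]
    form an initial segment of [0, ..., h-1], and [F q = 1] otherwise.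
    Constant profiles are accepted, so [F] takes the value [s] on the constant
    profile [1] and on its image, the constant profile [psi], under a symmetry
    [(phi, psi)]; this forces [s = s psi], i.e. [psi = 1].
    Applying a symmetry [(phi, 1)] to the profile reporting [s] exactly on
    [{i | i <= j}] must again give an initial segment, which says that
    [phi^-1] is nondecreasing; a nondecreasing permutation of a finite chain
    is the identity. *)

Set Implicit Arguments.
Unset Strict Implicit.
Unset Printing Implicit Defensive.

Import Order.TTheory.
Local Open Scope group_scope.

Lemma perm_nondecreasing_id d (T : finOrderType d) (t : {perm T}) :
  {homo t : x y / (x <= y)%O} -> t = 1.
Proof.
move=> t_homo; apply/permP => x; rewrite perm1.
apply: (Order.mono_unique (g := id)) => //.
exact/le_mono/(inj_homo_lt (@perm_inj _ t)).
Qed.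

Lemma exists_perm_neq1 n : (1 < n)%N -> exists s : 'S_n, s != 1.
Proof.
case: n => [|[|n]] // _; exists (tperm ord0 ord_max).
by apply/eqP => /permP /(_ ord0); rewrite tpermL perm1 => /(congr1 val).
Qed.

Section TrivialSymmetry.

Variables h n : nat.
Implicit Types (F : SPF h n) (p q : profile h n).

Lemma act_profileE p g i : act_profile p g i = p (g.1^-1 i) * g.2.
Proof. exact: ffunE. Qed.

Lemma act_profile1 p : act_profile p (1, 1) = p.
Proof. by apply/ffunP => i; rewrite act_profileE /= invg1 perm1 mulg1. Qed.

Lemma symgroup1 F : (1, 1) \in symgroup F.
Proof. by rewrite inE; apply/forallP => p; rewrite act_profile1 mulg1. Qed.

Lemma anongroup_trivial F :
  symgroup F = trivial_sub h n -> anongroup F = trivial_sub h n.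
Proof. by rewrite /anongroup => ->; apply/setIidPl; rewrite sub1set inE. Qed.

Lemma neutgroup_trivial F :
  symgroup F = trivial_sub h n -> neutgroup F = trivial_sub h n.
Proof. by rewrite /neutgroup => ->; apply/setIidPl; rewrite sub1set inE. Qed.

Variables (s : 'S_n) (s_neq1 : s != 1).

Definition prefix_profile q : bool :=
  [forall a : 'I_h, forall b : 'I_h, ((a <= b)%N && (q b == s)) ==> (q a == s)].

Definition prefix_spf : SPF h n := fun q => if prefix_profile q then s else 1.

Definition segment_profile (j : 'I_h) : profile h n :=
  [ffun i : 'I_h => if (i <= j)%N then s else 1].

Lemma prefix_spf_eqs q : (prefix_spf q == s) = prefix_profile q.
Proof.
by rewrite /prefix_spf; case: ifP; rewrite ?eqxx // eq_sym (negPf s_neq1).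
Qed.

Lemma prefix_profile_const (c : 'S_n) : prefix_profile [ffun=> c].
Proof.
apply/forallP => a; apply/forallP => b.
by rewrite !ffunE; apply/implyP => /andP[].
Qed.

Lemma segment_profile_eqs j i : (segment_profile j i == s) = (i <= j)%N.
Proof. by rewrite ffunE; case: ifP; rewrite ?eqxx // eq_sym (negPf s_neq1). Qed.

Lemma prefix_segment_profile j : prefix_profile (segment_profile j).
Proof.
apply/forallP => a; apply/forallP => b; rewrite !segment_profile_eqs.
by apply/implyP => /andP[/leq_trans]; apply.
Qed.

Lemma prefix_spf_sym_neutral phi psi :
  (phi, psi) \in symgroup prefix_spf -> psi = 1.
Proof.
rewrite inE => /forallP /(_ [ffun=> 1]).
have -> : act_profile [ffun=> 1] (phi, psi) = [ffun=> psi].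
  by apply/ffunP => i; rewrite !ffunE mul1g.
rewrite /prefix_spf !prefix_profile_const /= -{1}[s]mulg1.
by move=> /eqP /mulgI <-.
Qed.

Lemma prefix_spf_sym_anonymous phi :
  (phi, 1) \in symgroup prefix_spf -> phi = 1.
Proof.
rewrite inE => /forallP sym.
apply/eqP; rewrite -invg_eq1; apply/eqP.
apply: perm_nondecreasing_id => a b le_ab.
have /eqP := sym (segment_profile (phi^-1 b)); rewrite mulg1 => F_act.
have : prefix_profile (act_profile (segment_profile (phi^-1 b)) (phi, 1)).
  by rewrite -prefix_spf_eqs F_act prefix_spf_eqs prefix_segment_profile.
move=> /forallP /(_ a) /forallP /(_ b); rewrite !act_profileE /= !mulg1.
by rewrite !segment_profile_eqs leqnn andbT => /implyP; apply.
Qed.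

Lemma symgroup_prefix_spf : symgroup prefix_spf = trivial_sub h n.
Proof.
apply/setP => -[phi psi]; rewrite in_set1; apply/idP/eqP => [sym | [-> ->]].
  have psi1 := prefix_spf_sym_neutral sym; subst psi.
  by rewrite (prefix_spf_sym_anonymous sym).
exact: symgroup1.
Qed.

End TrivialSymmetry.

Theorem mainTheorem7 (h n : nat) (hh : (2 <= h)%N) (hn : (2 <= n)%N) :
  is_anonymity_group (trivial_sub h n) /\
  is_neutrality_group (trivial_sub h n) /\
  is_symmetry_group (trivial_sub h n).
Proof.
have [s s_neq1] := exists_perm_neq1 hn.
have sym_trivial := @symgroup_prefix_spf h n s s_neq1.
split; [|split]; exists (@prefix_spf h n s).
- exact: anongroup_trivial.
- exact: neutgroup_trivial.
- exact: sym_trivial.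
Qed.
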